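(* Let $\mathcal{H}$ be a real Hilbert space, $A:\mathcal{H}\rightrightarrows\mathcal{H}$ maximal monotone, $p\geq2$ an integer, and $\varphi(\lambda,x)=\lambda^{1/(p-1)}\|x-(I+\lambda A)^{-1}x\|$ for $\lambda>0$. Then for all $x\in\mathcal{H}$ and $0<\lambda_1\leq\lambda_2$, \[ \left(\tfrac{\lambda_2}{\lambda_1}\right)^{\frac1{p-1}}\varphi(\lambda_1,x)\leq\varphi(\lambda_2,x)\leq\left(\tfrac{\lambda_2}{\lambda_1}\right)^{\frac p{p-1}}\varphi(\lambda_1,x). \] In addition, for any fixed $\lambda>0$, $\varphi(\lambda,x)=0$ if and only if $0\in Ax$.
   Context: $(I+\lambda A)^{-1}$ is the resolvent of $A$ of index $\lambda$. *)

From HB Require Import structures.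
From mathcomp Require Import all_boot all_order all_algebra.
From mathcomp Require Import all_classical all_reals all_analysis.
Set Implicit Arguments. Unset Strict Implicit. Unset Printing Implicit Defensive.
Import Order.TTheory GRing.Theory Num.Theory.
Import numFieldNormedType.Exports.
Local Open Scope classical_set_scope.
Local Open Scope ring_scope.

Definition is_inner_product (R : realType) (H : normedModType R)
  (ip : H -> H -> R) : Prop :=
  [/\ forall x y, ip x y = ip y x,
      forall a x y z, ip (a *: x + y) z = a * ip x z + ip y z
    & forall x, ip x x = `|x| ^+ 2].

Definition monotone_op (R : realType) (H : normedModType R)
  (ip : H -> H -> R) (A : H -> set H) : Prop :=
  forall x y u v, A x u -> A y v -> 0 <= ip (x - y) (u - v).

Definition maximal_monotone (R : realType) (H : normedModType R)
  (ip : H -> H -> R) (A : H -> set H) : Prop :=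
  monotone_op ip A /\
  forall B : H -> set H, monotone_op ip B ->
    (forall x, A x `<=` B x) -> forall x, B x = A x.

(* resolvent (I + lam A)^{-1} x : the (for maximal monotone A, unique) y with
   x \in y + lam A y; chosen via xget (default 0 if none exists). *)
Definition resolvent (R : realType) (H : normedModType R)
  (A : H -> set H) (lam : R) (x : H) : H :=
  xget 0 [set y | exists u, A y u /\ x = y + lam *: u].

Definition phi (R : realType) (H : normedModType R) (A : H -> set H)
  (p : nat) (lam : R) (x : H) : R :=
  lam `^ (1 / (p.-1)%:R) * `|x - resolvent A lam x|.

From HB Require Import structures.
From mathcomp Require Import all_boot all_order all_algebra.
From mathcomp Require Import all_classical all_reals all_analysis.
From mathcomp Require Import ring lra.
Import Order.TTheory GRing.Theory Num.Theory.
Import numFieldNormedType.Exports.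
Local Open Scope classical_set_scope.
Local Open Scope ring_scope.

(* Minty's theorem makes the resolvent J_lam = (I + lam A)^-1 total and
   single-valued, and the Yosida approximation A_lam x = (x - J_lam x) / lam
   lies in A (J_lam x).  Monotonicity of A at J_l1 x and J_l2 x gives
   l1 |A_l1 x|^2 + l2 |A_l2 x|^2 <= (l1 + l2) <A_l1 x, A_l2 x>, hence, by
   Cauchy-Schwarz, |A_l2 x| <= |A_l1 x| and l1 |A_l1 x| <= l2 |A_l2 x| for
   l1 <= l2; as phi(lam, x) = lam^(p/(p-1)) |A_lam x|, both bounds follow.
   Minty's theorem is proved by minimizing over H x H the Fitzpatrick function
   of the graph plus (|x|^2 + |u|^2) / 2: a minimizer (x, u) exists by
   completeness, and its optimality condition forces x + u = 0 and
   (x, u) = (-u, -x) in the graph. *)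

Set Implicit Arguments.
Unset Strict Implicit.
Unset Printing Implicit Defensive.

Section InnerProduct.
Context {R : realType} {H : normedModType R} {ip : H -> H -> R}.
Hypothesis ip_inner : is_inner_product ip.

Lemma ipC x y : ip x y = ip y x. Proof. by case: ip_inner. Qed.

Lemma ipxx x : ip x x = `|x| ^+ 2. Proof. by case: ip_inner. Qed.

Lemma ipDl x y z : ip (x + y) z = ip x z + ip y z.
Proof. by case: ip_inner => _ /(_ 1 x y z) + _; rewrite scale1r mul1r. Qed.

Lemma ip0l z : ip 0 z = 0.
Proof. by have := ipDl 0 0 z; rewrite addr0; lra. Qed.

Lemma ipZl a x z : ip (a *: x) z = a * ip x z.
Proof. by case: ip_inner => _ /(_ a x 0 z) + _; rewrite addr0 ip0l addr0. Qed.

Lemma ipNl x z : ip (- x) z = - ip x z.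
Proof. by rewrite -scaleN1r ipZl mulN1r. Qed.

Lemma ipBl x y z : ip (x - y) z = ip x z - ip y z.
Proof. by rewrite ipDl ipNl. Qed.

Lemma ip0r z : ip z 0 = 0.
Proof. by rewrite ipC ip0l. Qed.

Lemma ipDr x y z : ip z (x + y) = ip z x + ip z y.
Proof. by rewrite ipC ipDl !(ipC z). Qed.

Lemma ipZr a x z : ip z (a *: x) = a * ip z x.
Proof. by rewrite ipC ipZl ipC. Qed.

Lemma ipNr x z : ip z (- x) = - ip z x.
Proof. by rewrite ipC ipNl ipC. Qed.

Lemma ipBr x y z : ip z (x - y) = ip z x - ip z y.
Proof. by rewrite ipDr ipNr. Qed.

Definition ipE := (ipDl, ipDr, ipBl, ipBr, ipNl, ipNr, ipZl, ipZr, ip0l, ip0r).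

Lemma ipxx_ge0 x : 0 <= ip x x. Proof. by rewrite ipxx sqr_ge0. Qed.

Lemma ipxx_eq0 x : (ip x x == 0) = (x == 0).
Proof. by rewrite ipxx sqrf_eq0 normr_eq0. Qed.

Lemma ip_cauchy_schwarz u v : ip u v <= `|u| * `|v|.
Proof.
have : 0 <= `|u| * `|v| * (`|u| * `|v| - ip u v).
  by have := ipxx_ge0 (`|v| *: u - `|u| *: v); rewrite !ipE (ipC v u) !ipxx; nra.
have [uv0|uv_gt0] := eqVneq (`|u| * `|v|) 0; last first.
  by rewrite pmulr_rge0 ?subr_ge0 // lt_def uv_gt0 mulr_ge0.
move: uv0 => /eqP; rewrite mulf_eq0 !normr_eq0 => /orP[]/eqP-> _.
- by rewrite ip0l normr0 mul0r.
- by rewrite ip0r normr0 mulr0.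
Qed.

End InnerProduct.

Lemma ge0_of_ge0_affine {R : realFieldType} (c K : R) :
  (forall t, 0 < t <= 1 -> 0 <= c + t * K) -> 0 <= c.
Proof.
move=> h; rewrite leNgt; apply/negP => c_lt0.
have K_le := ler_norm K; have K_ge0 := normr_ge0 K.
pose d := 2 * (`|K| + 1) - c; have d_gt0 : 0 < d by rewrite /d; lra.
pose t := - c / d; have td : t * d = - c by rewrite /t mulfVK // gt_eqF.
have t_gt0 : 0 < t by rewrite divr_gt0 // oppr_gt0.
have t_le1 : t <= 1 by rewrite ler_pdivrMr // mul1r /d; lra.
have := h t; rewrite t_gt0 t_le1 => /(_ isT).
have : t * K <= t * `|K| by rewrite ler_wpM2l // ltW.
have : t * (`|K| - d) < 0 by rewrite pmulr_rlt0 // /d; lra.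
lra.
Qed.

Lemma cross_le0_bounds {R : realDomainType} (l1 l2 a b : R) :
  0 < l1 <= l2 -> 0 <= b -> (l1 * a - l2 * b) * (a - b) <= 0 ->
  b <= a /\ l1 * a <= l2 * b.
Proof.
move=> /andP[l1_gt0 l12] b_ge0 cross.
have b_le_a : b <= a.
  rewrite leNgt; apply/negP => a_lt_b.
  have : l1 * a < l2 * b.
    by apply: lt_le_trans (_ : l1 * b <= _); rewrite ?ltr_pM2l ?ler_wpM2r.
  nra.
split => //; move: b_le_a; rewrite le_eqVlt => /orP[/eqP <-|b_lt_a].
  by rewrite ler_wpM2r.
nra.
Qed.

Lemma harmonic_sqdist_cvg {R : realType} {V : completeNormedModType R}
    (w : nat -> V) (c : R) :
  (forall n k, `|w n - w k| ^+ 2 <= c * (harmonic n + harmonic k)) ->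
  cvg (w @ \oo).
Proof.
move=> hw; apply: cauchy_cvg; apply: cauchy_exP => e e_gt0.
have e2_gt0 : 0 < e ^+ 2 / 2 by rewrite divr_gt0 // exprn_gt0.
have : c * harmonic n @[n --> \oo] --> 0.
  by rewrite -(mulr0 c); apply: cvgMl_tmp; exact: cvg_harmonic.
move=> /cvgr_lt /(_ _ e2_gt0) [N _ small].
exists (w N); exists N => // n /= le_Nn; rewrite -ball_normE /ball_ /=.
rewrite -(ltr_pXn2r (_ : 0 < 2)%N) ?nnegrE ?(ltW e_gt0) //.
apply: le_lt_trans (hw N n) _.
have := small N (leqnn N); have := small n le_Nn; lra.
Qed.

Section Minty.
Context {R : realType} {H : completeNormedModType R} {ip : H -> H -> R}.
Hypothesis ip_inner : is_inner_product ip.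
Variable G : H -> set H.
Hypothesis G_mono : monotone_op ip G.
Hypothesis G_max :
  forall x u, (forall y v, G y v -> 0 <= ip (x - y) (u - v)) -> G x u.

Local Notation ipE := (ipE ip_inner).
Local Notation ipC := (ipC ip_inner).
Local Notation ipxx := (ipxx ip_inner).

(* The supremum of [fitz y v x u] over the graph of G is the Fitzpatrick
   function of G at (x, u) plus (|x|^2 + |u|^2) / 2. *)
Definition fitz (y v x u : H) : R :=
  ip x v + ip y u - ip y v + (ip x x + ip u u) / 2.

Definition fitz_ub (x u : H) (M : R) : Prop :=
  forall y v, G y v -> fitz y v x u <= M.

Definition fitz_inf : R := inf [set M | exists x u, fitz_ub x u M].

Lemma graph_nonempty : exists y v, G y v.
Proof.
have [//|noG] := pselect (exists y v, G y v).
by exists 0, 0; apply: G_max => y v Gyv; case: noG; exists y, v.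
Qed.

Lemma fitzE y v x u :
  fitz y v x u = (`|x + v| ^+ 2 + `|u + y| ^+ 2 - `|y + v| ^+ 2) / 2.
Proof. rewrite -!ipxx /fitz !ipE (ipC v x) (ipC y u) (ipC v y); lra. Qed.

Lemma fitz_diagE x u : fitz x u x u = `|x + u| ^+ 2 / 2.
Proof. by rewrite fitzE (addrC u x) addrK. Qed.

Lemma fitz_sub_diag y v x u :
  fitz y v x u = fitz x u x u - ip (x - y) (u - v).
Proof. rewrite /fitz !ipE; lra. Qed.

Lemma fitz_ub_diag x u M : fitz_ub x u M -> fitz x u x u <= M.
Proof.
move=> ub; rewrite leNgt; apply/negP => lt_M.
suff /ub : G x u by lra.
apply: G_max => y v Gyv; have := ub y v Gyv; rewrite fitz_sub_diag; lra.
Qed.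

Lemma has_inf_fitz : has_inf [set M | exists x u, fitz_ub x u M].
Proof.
split.
  have [y0 [v0 Gyv0]] := graph_nonempty.
  exists (fitz y0 v0 y0 v0), y0, v0 => y v Gyv.
  by have := G_mono Gyv0 Gyv; rewrite fitz_sub_diag; lra.
exists 0 => M [x [u /fitz_ub_diag]]; rewrite fitz_diagE.
by have := sqr_ge0 `|x + u|; lra.
Qed.

Lemma fitz_inf_le x u M : fitz_ub x u M -> fitz_inf <= M.
Proof. by move=> ub; apply: (ge_inf (proj2 has_inf_fitz)); exists x, u. Qed.

Lemma fitz_ub_midpoint x1 u1 M1 x2 u2 M2 :
  fitz_ub x1 u1 M1 -> fitz_ub x2 u2 M2 ->
  fitz_ub (2^-1 *: (x1 + x2)) (2^-1 *: (u1 + u2))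
    ((M1 + M2) / 2 - (`|x1 - x2| ^+ 2 + `|u1 - u2| ^+ 2) / 8).
Proof.
move=> ub1 ub2 y v Gyv; have := ub1 y v Gyv; have := ub2 y v Gyv.
rewrite -!ipxx /fitz !ipE (ipC x2 x1) (ipC u2 u1); lra.
Qed.

Lemma fitz_ub_cvg (xs us : nat -> H) (Ms : nat -> R) x u M :
  xs @ \oo --> x -> us @ \oo --> u -> Ms @ \oo --> M ->
  (forall n, fitz_ub (xs n) (us n) (Ms n)) -> fitz_ub x u M.
Proof.
move=> xs_x us_u Ms_M ub y v Gyv.
have sq_cvg (zs : nat -> H) z :
    zs @ \oo --> z -> `|zs n| ^+ 2 @[n --> \oo] --> `|z| ^+ 2.
  by move=> /cvg_norm zs_z; rewrite expr2; under eq_fun do rewrite expr2; exact: cvgM.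
have fitz_cvg : fitz y v (xs n) (us n) @[n --> \oo] --> fitz y v x u.
  rewrite fitzE; under eq_fun do rewrite fitzE.
  apply: cvgMr_tmp; apply: cvgB; last exact: cvg_cst.
  by apply: cvgD; apply: sq_cvg; apply: cvgD => //; exact: cvg_cst.
by apply: (ler_cvg_to fitz_cvg Ms_M); apply: nearW => n; exact: ub.
Qed.

Lemma fitz_inf_attained : exists x u, fitz_ub x u fitz_inf.
Proof.
have approx n : exists xu : H * H, fitz_ub xu.1 xu.2 (fitz_inf + harmonic n).
  have [M [x [u ub]] lt_inf] := inf_adherent (harmonic_gt0 n) has_inf_fitz.
  by exists (x, u) => y v Gyv; apply/ltW/(le_lt_trans (ub y v Gyv)).
have [xu ub] := choice approx.
(* By the parallelogram law, midpoints of the approximate minimizers are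
   themselves bounds, so the sequence is Cauchy. *)
have sqdist n k : `|(xu n).1 - (xu k).1| ^+ 2 + `|(xu n).2 - (xu k).2| ^+ 2
    <= 4 * (harmonic n + harmonic k).
  by have := fitz_inf_le (fitz_ub_midpoint (ub n) (ub k)); lra.
have xs_cvg : cvg ((fun n => (xu n).1) @ \oo).
  apply: (@harmonic_sqdist_cvg _ _ _ 4) => n k.
  by have := sqdist n k; have := sqr_ge0 `|(xu n).2 - (xu k).2|; lra.
have us_cvg : cvg ((fun n => (xu n).2) @ \oo).
  apply: (@harmonic_sqdist_cvg _ _ _ 4) => n k.
  by have := sqdist n k; have := sqr_ge0 `|(xu n).1 - (xu k).1|; lra.
exists (lim ((fun n => (xu n).1) @ \oo)), (lim ((fun n => (xu n).2) @ \oo)).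
apply: (fitz_ub_cvg xs_cvg us_cvg _ ub).
by rewrite -[X in _ --> X]addr0; apply: cvgD; [exact: cvg_cst | exact: cvg_harmonic].
Qed.

(* First-order optimality of a minimizer along the segment towards (y, v). *)
Lemma fitz_inf_vi x0 u0 y v : fitz_ub x0 u0 fitz_inf -> G y v ->
  `|x0 + u0| ^+ 2 <= ip (y + u0) (v + x0).
Proof.
move=> ub Gyv; set m := fitz_inf in ub *.
pose q x u := (ip x x + ip u u) / 2.
pose xt t := x0 + t *: (y - x0); pose ut t := u0 + t *: (v - u0).
have segment t : 0 <= t <= 1 ->
    fitz_ub (xt t) (ut t) ((1 - t) * (m - q x0 u0) + t * ip y v + q (xt t) (ut t)).
  move=> /andP[t_ge0 t_le1] y' v' Gyv'.
  have -> : fitz y' v' (xt t) (ut t) = (1 - t) * (fitz y' v' x0 u0 - q x0 u0)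
      + t * (ip y v' + ip y' v - ip y' v') + q (xt t) (ut t).
    by rewrite /fitz /q /xt /ut !ipE; ring.
  rewrite lerD2r; apply: lerD; apply: ler_wpM2l; rewrite ?subr_ge0 //.
    by rewrite lerD2r; exact: ub.
  by have := G_mono Gyv Gyv'; rewrite !ipE; lra.
have qt t : q (xt t) (ut t) = q x0 u0 + t * (ip x0 (y - x0) + ip u0 (v - u0))
    + t ^+ 2 * q (y - x0) (v - u0).
  by rewrite /q /xt /ut !ipE (ipC y x0) (ipC v u0); field.
have affine t : 0 < t <= 1 -> 0 <= (ip y v - m + q x0 u0 + ip x0 (y - x0)
    + ip u0 (v - u0)) + t * q (y - x0) (v - u0).
  move=> /andP[t_gt0 t_le1]; rewrite -(pmulr_rge0 _ t_gt0).
  have := fitz_inf_le (segment t _); rewrite (ltW t_gt0) t_le1 qt -/m => /(_ isT).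
  move: (q x0 u0) (q (y - x0) (v - u0)) => q0 q1; lra.
have := ge0_of_ge0_affine affine; have := fitz_ub_diag ub.
by rewrite -!ipxx /fitz /q !ipE (ipC y x0) (ipC u0 x0); lra.
Qed.

Theorem minty_zero : exists x u, G x u /\ x + u = 0.
Proof.
have [x0 [u0 ub]] := fitz_inf_attained.
have G_opp : G (- u0) (- x0).
  apply: G_max => y v Gyv; have := fitz_inf_vi ub Gyv.
  by have := sqr_ge0 `|x0 + u0|; rewrite !ipE; lra.
have : `|x0 + u0| ^+ 2 <= 0.
  by have := fitz_inf_vi ub G_opp; rewrite !addNr ipE.
rewrite le_eqVlt ltNge sqr_ge0 orbF sqrf_eq0 normr_eq0 addr_eq0 => /eqP x0E.
exists x0, u0; split; last by rewrite x0E addNr.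
by move: G_opp; rewrite -x0E {2}x0E opprK.
Qed.

End Minty.

Section Resolvent.
Context {R : realType} {H : completeNormedModType R} {ip : H -> H -> R}.
Hypothesis ip_inner : is_inner_product ip.
Variable A : H -> set H.
Hypothesis A_maxmono : maximal_monotone ip A.

Local Notation ipE := (ipE ip_inner).
Local Notation ipC := (ipC ip_inner).
Local Notation ipZr := (ipZr ip_inner).

Lemma A_mono x y u v : A x u -> A y v -> 0 <= ip (x - y) (u - v).
Proof. by case: A_maxmono => + _; apply. Qed.

Lemma maximal_monotone_related x u :
  (forall y v, A y v -> 0 <= ip (x - y) (u - v)) -> A x u.
Proof.
move=> rel; pose B y := [set w | A y w \/ (y = x /\ w = u)].
have B_mono : monotone_op ip B.
  move=> x1 y1 u1 v1 [A1|[-> ->]] [A2|[-> ->]].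
  - exact: A_mono.
  - by have := rel _ _ A1; rewrite !ipE; lra.
  - exact: rel.
  - by rewrite !subrr ipE.
by rewrite -(A_maxmono.2 B B_mono (fun y w Ayw => or_introl Ayw) x); right.
Qed.

Lemma resolvent_range lam x : 0 < lam -> exists y u, A y u /\ x = y + lam *: u.
Proof.
move=> lam_gt0.
pose G y := [set w | exists u, A y u /\ w = lam *: u - x].
have G_mono : monotone_op ip G.
  move=> y1 y2 _ _ [u1 [A1 ->]] [u2 [A2 ->]].
  rewrite opprB addrA subrK -scalerBr ipZr pmulr_rge0 //; exact: A_mono.
have G_max y w : (forall y' w', G y' w' -> 0 <= ip (y - y') (w - w')) -> G y w.
  move=> rel; exists (lam^-1 *: (w + x)).
  split; last by rewrite scalerA mulfV ?gt_eqF // scale1r addrK.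
  apply: maximal_monotone_related => y' u' Ayu'.
  have := rel y' (lam *: u' - x) (ex_intro _ u' (conj Ayu' erefl)).
  have -> : w - (lam *: u' - x) = lam *: (lam^-1 *: (w + x) - u').
    by rewrite scalerBr scalerKV ?gt_eqF // opprB addrA.
  by rewrite ipZr pmulr_rge0.
have [y [_ [[u [Ayu ->]] sum0]]] := minty_zero ip_inner G_mono G_max.
by exists y, u; split => //; apply/eqP; rewrite eq_sym -subr_eq0 -addrA sum0.
Qed.

Lemma resolvent_eq lam x y u : 0 < lam -> A y u -> x = y + lam *: u ->
  resolvent A lam x = y.
Proof.
move=> lam_gt0 Ayu xE; apply: xget_unique; first by exists u.
move=> y' [u' [Ayu' xE']].
have yE : y = x - lam *: u by rewrite xE addrK.
have y'E : y' = x - lam *: u' by rewrite xE' addrK.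
suff : u' = u by rewrite yE y'E => ->.
have : lam * ip (u' - u) (u' - u) <= 0.
  by have := A_mono Ayu' Ayu; rewrite yE y'E !ipE (ipC u u'); lra.
rewrite pmulr_rle0 // => sq_le0; apply/eqP; rewrite -subr_eq0 -(ipxx_eq0 ip_inner).
by rewrite eq_le sq_le0 ipxx_ge0.
Qed.

Definition yosida lam x := lam^-1 *: (x - resolvent A lam x).

Lemma resolvent_sub_yosida lam x : 0 < lam ->
  x - resolvent A lam x = lam *: yosida lam x.
Proof. by move=> lam_gt0; rewrite /yosida scalerKV ?gt_eqF. Qed.

Lemma yosida_graph lam x : 0 < lam -> A (resolvent A lam x) (yosida lam x).
Proof.
move=> lam_gt0; have [y [u [Ayu xE]]] := resolvent_range x lam_gt0.
by rewrite /yosida (resolvent_eq lam_gt0 Ayu xE) {1}xE addrAC subrr add0r scalerK ?gt_eqF.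
Qed.

Lemma yosida_norm_bounds l1 l2 x : 0 < l1 -> l1 <= l2 ->
  `|yosida l2 x| <= `|yosida l1 x| /\ l1 * `|yosida l1 x| <= l2 * `|yosida l2 x|.
Proof.
move=> l1_gt0 l12; have l2_gt0 := lt_le_trans l1_gt0 l12.
have resolventE l : 0 < l -> resolvent A l x = x - l *: yosida l x.
  by move=> l_gt0; rewrite -resolvent_sub_yosida // opprB addrC subrK.
have := A_mono (yosida_graph x l1_gt0) (yosida_graph x l2_gt0).
rewrite !resolventE //; move: (yosida l1 x) (yosida l2 x) => y1 y2.
rewrite !ipE (ipC y2 y1) !(ipxx ip_inner).
have := ip_cauchy_schwarz ip_inner y1 y2.
move: (ip y1 y2) `|y1| `|y2| (normr_ge0 y2) => c a b b_ge0 cs mono.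
apply: cross_le0_bounds; rewrite ?l1_gt0 //.
have : (l1 + l2) * c <= (l1 + l2) * (a * b) by rewrite ler_wpM2l // ltW // addr_gt0.
nra.
Qed.

Lemma powR_resolvent_bounds (r : R) x l1 l2 : 0 < l1 -> l1 <= l2 ->
  (l2 / l1) `^ r * (l1 `^ r * `|x - resolvent A l1 x|)
    <= l2 `^ r * `|x - resolvent A l2 x| /\
  l2 `^ r * `|x - resolvent A l2 x|
    <= (l2 / l1) `^ (1 + r) * (l1 `^ r * `|x - resolvent A l1 x|).
Proof.
move=> l1_gt0 l12; have l2_gt0 := lt_le_trans l1_gt0 l12.
have pow1 l : 0 < l -> l `^ (1 + r) = l * l `^ r.
  by move=> l_gt0; rewrite powRD ?powRr1 ?ltW // (gt_eqF l_gt0) implybT.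
have dist l : 0 < l -> l `^ r * `|x - resolvent A l x| = l `^ (1 + r) * `|yosida l x|.
  by move=> l_gt0; rewrite resolvent_sub_yosida // normrZ gtr0_norm // pow1 // mulrCA mulrA.
have ratio s : (l2 / l1) `^ s * l1 `^ s = l2 `^ s.
  by rewrite -powRM ?divfK ?gt_eqF // ltW // divr_gt0.
have [b_le_a l1a_le_l2b] := yosida_norm_bounds x l1_gt0 l12.
rewrite !dist //; split; last by rewrite mulrA ratio ler_wpM2l ?powR_ge0.
have -> : (l2 / l1) `^ r * (l1 `^ (1 + r) * `|yosida l1 x|)
    = l2 `^ r * (l1 * `|yosida l1 x|) by rewrite pow1 // -(ratio r); ring.
by rewrite pow1 // -mulrA [l2 * _]mulrCA ler_wpM2l ?powR_ge0.
Qed.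

Lemma resolvent_fixed lam x : 0 < lam -> resolvent A lam x = x <-> A x 0.
Proof.
move=> lam_gt0; split => [Jx | Ax0].
  by have := yosida_graph x lam_gt0; rewrite /yosida Jx subrr scaler0.
by apply: resolvent_eq lam_gt0 Ax0 _; rewrite scaler0 addr0.
Qed.

End Resolvent.

Theorem lemma2p2 (R : realType) (H : completeNormedModType R)
  (ip : H -> H -> R) (A : H -> set H) (p : nat) :
  is_inner_product ip -> maximal_monotone ip A -> (2 <= p)%N ->
  (forall (x : H) (lam1 lam2 : R), 0 < lam1 -> lam1 <= lam2 ->
     (lam2 / lam1) `^ (1 / (p.-1)%:R) * phi A p lam1 x <= phi A p lam2 x /\
     phi A p lam2 x <= (lam2 / lam1) `^ (p%:R / (p.-1)%:R) * phi A p lam1 x)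
  /\
  (forall (lam : R), 0 < lam -> forall x : H, phi A p lam x = 0 <-> A x 0).
Proof.
move=> ip_inner A_maxmono p_ge2; rewrite /phi.
have -> : p%:R / (p.-1)%:R = 1 + 1 / (p.-1)%:R :> R.
  have p1_neq0 : (p.-1)%:R != 0 :> R by rewrite pnatr_eq0 -lt0n -ltnS prednK // ltnW.
  by rewrite -[in p%:R](prednK (ltnW p_ge2)) -addn1 natrD mulrDl divff // addrC mul1r.
split => [x l1 l2 l1_gt0 l12 | lam lam_gt0 x].
  exact: (powR_resolvent_bounds ip_inner A_maxmono).
rewrite -(resolvent_fixed ip_inner A_maxmono x lam_gt0); split => [|->].
  by move/eqP; rewrite mulf_eq0 gt_eqF ?powR_gt0 //= normr_eq0 subr_eq0 => /eqP <-.
by rewrite subrr normr0 mulr0.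
Qed.
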